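(* Let $K>0$ and $m>0$ be fixed, and consider $f(q)=q!\left(\frac{m}{K}\right)^q$ for positive integers $q$ (by Theorem 2 of the paper, $f(q)$ is the asymptotic value of $p_{\textnormal{compromised}}/p_s$ in the $q$-composite scheme with key ring size $K$ when $m$ nodes are captured, so with $K$ and $p_s$ fixed this is the quantity to minimize over $q$). Then $f$ attains its minimum over the positive integers at $$q^*=\max\left\{\left\lfloor\frac{K}{m}\right\rfloor,\,1\right\}.$$
   Context: $\lfloor x\rfloor$ denotes the largest integer not exceeding $x$. In the $q$-composite scheme each sensor gets $K$ distinct keys uniformly at random from a key pool, two sensors share a secure link iff their key rings share at least $q$ keys, $p_s$ is the probability of this event, and $p_{\textnormal{compromised}}$ is the probability that a link between two non-captured sensors has all its shared keys held by the $m$ captured sensors. *)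

From mathcomp Require Import all_boot all_order all_algebra.
Set Implicit Arguments. Unset Strict Implicit. Unset Printing Implicit Defensive.
Import Order.TTheory GRing.Theory Num.Theory.
Local Open Scope ring_scope.

Definition fq (R : realFieldType) (K m q : nat) : R :=
  (q`!)%:R * ((m%:R / K%:R) ^+ q).

Definition qstar (K m : nat) : nat := maxn (K %/ m) 1.

From mathcomp Require Import all_boot all_order all_algebra.
From mathcomp Require Import ring.
Import Order.TTheory GRing.Theory Num.Theory.
Local Open Scope ring_scope.

(* Consecutive values satisfy f(n+1) / f(n) = (n+1) m / K, so f decreases
   while (n+1) m <= K and increases once (n+1) m >= K: its minimum over the
   positive integers sits at the last n with n m <= K, i.e. at floor (K/m),
   or at 1 when K < m. *)

Lemma valley_min {disp : Order.disp_t} {T : porderType disp} (f : nat -> T) c :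
  (forall n, (n < c)%N -> (f n.+1 <= f n)%O) ->
  (forall n, (c <= n)%N -> (f n <= f n.+1)%O) ->
  forall n, (f c <= f n)%O.
Proof.
move=> f_dec f_inc n; case: (leqP n c) => [le_nc | /ltnW le_cn].
- have dec_to_c : {in [pred i | i <= c]%N &,
      {homo f : i j / (i <= j)%N >-> (j <= i)%O}}.
    apply: homo_leq_in => [x|y x z yx zy|i j _ jc k /andP[_ /ltnW kj]|i _ /f_dec //].
    + exact: lexx.
    + exact: le_trans zy yx.
    + exact: leq_trans kj jc.
  by apply: dec_to_c; rewrite ?inE.
- have inc_from_c : {homo (fun i => f (c + i)%N) : i j / (i <= j)%N >-> (i <= j)%O}.
    apply: homo_leq => [x|y x z|i]; [exact: lexx | exact: le_trans |].
    by rewrite addnS; apply: f_inc; rewrite leq_addr.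
  by rewrite -(subnKC le_cn) -[X in f X]addn0; apply: inc_from_c.
Qed.

Section ScaledFactorial.

Variables (R : realFieldType) (K m : nat).
Hypotheses (K_gt0 : (0 < K)%N) (m_gt0 : (0 < m)%N).

Lemma fq_gt0 q : 0 < fq R K m q.
Proof. by rewrite mulr_gt0 ?exprn_gt0 ?divr_gt0 ?ltr0n ?fact_gt0. Qed.

Lemma fqS q : fq R K m q.+1 = fq R K m q * ((q.+1 * m)%:R / K%:R).
Proof. by rewrite /fq factS exprS !natrM; ring. Qed.

Lemma fqS_le q : (fq R K m q.+1 <= fq R K m q) = (q.+1 * m <= K)%N.
Proof. by rewrite fqS ger_pMr ?fq_gt0 // ler_pdivrMr ?ltr0n // mul1r ler_nat. Qed.

Lemma fq_leS q : (fq R K m q <= fq R K m q.+1) = (K <= q.+1 * m)%N.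
Proof. by rewrite fqS ler_pMr ?fq_gt0 // ler_pdivlMr ?ltr0n // mul1r ler_nat. Qed.

End ScaledFactorial.

Theorem corollary2 (R : realFieldType) (K m : nat) :
  (0 < K)%N -> (0 < m)%N ->
  forall q : nat, (0 < q)%N -> fq R K m (qstar K m) <= fq R K m q.
Proof.
move=> K_gt0 m_gt0 q q_gt0.
(* Index by q - 1: when K < m the minimum over all of nat would be at q = 0. *)
have qstarE : qstar K m = (K %/ m).-1.+1 by rewrite /qstar; case: (K %/ m)%N.
rewrite qstarE -(prednK q_gt0).
apply: (valley_min (fun n => fq R K m n.+1)) => n hn.
- rewrite fqS_le //; apply: leq_trans _ (leq_divM K m).
  by rewrite leq_mul2r -ltn_predRL hn orbT.
- rewrite fq_leS //; apply/ltnW/(leq_trans (ltn_ceil K m_gt0)).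
  by rewrite leq_mul2r !ltnS (leq_trans (leqSpred _)) ?orbT.
Qed.
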